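(* Let $d\ge3$, $\Omega=\{1,\ldots,d\}$, and $F\le F'\le\mathrm{Sym}(\Omega)$ with $F'$ preserving the orbits of $F$, $F$ nontrivial and $F'$ 2-transitive on $\Omega$. Let $G^+\le G(F,F')$ be the subgroup of elements $g$ such that $d(v,gv)$ is even for some (equivalently every) vertex $v$ of $T$. Then there exists a geodesic line $L$ in $T$ whose set-wise stabilizer in $G^+$ contains an element translating $L$ by distance $2$ and an element fixing a vertex $v_0\in L$ and reversing the orientation of $L$; consequently the set-wise stabilizer of $L$ in $G^+$ acts transitively on the geometric edges of $L$.
   Context: Let $T=\mathcal{T}_d$ be the $d$-regular tree with a fixed edge coloring $c\colon E(T)\to\Omega$ whose restriction $c_v$ to the edges $E(v)$ at each vertex $v$ is a bijection onto $\Omega$. For $g\in\mathrm{Aut}(T)$, $\sigma(g,v)=c_{gv}\circ g_v\circ c_v^{-1}$ with $g_v\colon E(v)\to E(gv)$ induced by $g$. $U(F')=\{g:\sigma(g,v)\in F'\ \forall v\}$, $G(F)=\{g:\sigma(g,v)\in F$ for all but finitely many $v\}$, $G(F,F')=G(F)\cap U(F')$. A geometric edge of $L$ is an unordered pair of adjacent vertices of $L$. *)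

From HB Require Import structures.
From mathcomp Require Import all_boot all_order all_algebra all_fingroup.
Set Implicit Arguments. Unset Strict Implicit. Unset Printing Implicit Defensive.
Import GRing.Theory Num.Theory.

(* Model of the d-regular tree T_d with its legal edge colouring, Omega = 'I_d.
   Vertices are reduced words over 'I_d (no two consecutive letters equal),
   stored most-recent-letter first.  The neighbour of w along the edge of colour c
   is [step w c]: cancel c if w starts with c, otherwise prepend c.
   Every edge {w, step w c} has colour c; at each vertex the colouring is a
   bijection onto 'I_d.  (Any two legal colourings of T_d are isomorphic.) *)

Definition reduced d (w : seq 'I_d) := sorted (fun a b => a != b) w.

Definition stepw d (w : seq 'I_d) (c : 'I_d) : seq 'I_d :=
  if w is a :: w' then (if a == c then w' else c :: w) else [:: c].

Lemma stepw_reduced d (w : seq 'I_d) c : reduced w -> reduced (stepw w c).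
Proof.
rewrite /reduced /stepw; case: w => [|a w'] //= H.
case: eqP => [_|ne]; first exact: (path_sorted H).
by rewrite /= H andbT; apply/eqP => E; apply: ne; rewrite E.
Qed.

Record vert d := Vert { word : seq 'I_d; _ : reduced word }.
HB.instance Definition _ d := [isSub for (@word d)].
HB.instance Definition _ d := [Equality of vert d by <:].

Definition step d (v : vert d) (c : 'I_d) : vert d :=
  @Vert d (stepw (word v) c) (stepw_reduced c (valP v)).

Definition adj d (u v : vert d) : Prop := exists c : 'I_d, v = step u c.

Definition is_aut d (g : vert d -> vert d) : Prop :=
  bijective g /\ forall u v, adj u v <-> adj (g u) (g v).

(* "sigma(g, v) = p" unfolded: g maps the edge of colour c at v onto the edge of
   colour p c at g v, for every colour c.  Hence sigma(g,v) \in F  <->  loc_in F g v. *)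
Definition loc_in d (F : {set {perm 'I_d}}) (g : vert d -> vert d) (v : vert d) : Prop :=
  exists2 p, p \in F & forall c, g (step v c) = step (g v) (p c).

Definition in_U d (F' : {set {perm 'I_d}}) g := forall v, loc_in F' g v.
Definition in_G d (F : {set {perm 'I_d}}) g :=
  exists s : seq (vert d), forall v, v \notin s -> loc_in F g v.
Definition in_GFF' d (F F' : {set {perm 'I_d}}) g :=
  is_aut g /\ in_G F g /\ in_U F' g.

Inductive walk d : nat -> vert d -> vert d -> Prop :=
| walk0 u : walk 0 u u
| walkS n u v w : walk n u v -> adj v w -> walk n.+1 u w.

Definition is_dist d (n : nat) (u v : vert d) : Prop :=
  walk n u v /\ forall m, m < n -> ~ walk m u v.

Definition in_Gplus d (F F' : {set {perm 'I_d}}) g :=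
  in_GFF' F F' g /\ exists v n, is_dist n v (g v) /\ ~~ odd n.

Definition geodesic_line d (l : int -> vert d) : Prop :=
  forall i j : int, is_dist `|i - j|%N (l i) (l j).

Definition stabilizes d (g : vert d -> vert d) (l : int -> vert d) : Prop :=
  (forall i, exists j, g (l i) = l j) /\ (forall j, exists i, g (l i) = l j).

Definition two_transitive d (F' : {set {perm 'I_d}}) : Prop :=
  forall a b a' b' : 'I_d, a != b -> a' != b' ->
    exists2 x, x \in F' & x a = a' /\ x b = b'.

Definition preserves_orbits d (F F' : {set {perm 'I_d}}) : Prop :=
  forall x, x \in F' -> forall w : 'I_d, exists2 y, y \in F & y w = x w.

From HB Require Import structures.
From mathcomp Require Import all_boot all_order all_algebra all_fingroup.
From mathcomp Require Import zify.
Set Implicit Arguments. Unset Strict Implicit. Unset Printing Implicit Defensive.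
Import GRing.Theory Num.Theory.

(* Pick q in F and a colour a with q a != a, and p in F' swapping a and q a.
   The line L through the root whose edge colours read a, q a, q^2 a, ... on one
   side and q a, q^2 a, ... on the other is reflected about the root by the
   automorphism acting as p at the root and as a constant element of F on each
   branch (q on branch a, q^-1 on branch q a, and on every other branch c an
   element of F agreeing with p at c, which exists as F' preserves F-orbits).
   The colour-preserving inversion of the root edge of colour a reflects L about
   that edge.  Composing the two reflections yields elements of G(F,F') acting on
   L as every map n |-> +-n + m, and such an element moves the root the even
   distance |m| exactly when m is even; these even ones give the translation by
   2, the reflection about the root and the transitivity on edges of L. *)

Section TreeWords.
Variable d : nat.
Implicit Types (w s t : seq 'I_d) (c : 'I_d) (u v : vert d).

Lemma reduced_rev w : reduced w -> reduced (rev w).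
Proof.
by rewrite /reduced rev_sorted; apply: sub_sorted => x y /=; rewrite eq_sym.
Qed.

Lemma reduced_map (P : {perm 'I_d}) w : reduced w -> reduced (map P w).
Proof.
rewrite /reduced sorted_map.
by apply: sub_sorted => x y /=; rewrite (inj_eq perm_inj).
Qed.

Lemma stepwK w c : reduced w -> stepw (stepw w c) c = w.
Proof.
case: w => [|x w] /=; first by rewrite eqxx.
case: (eqVneq x c) => [->|_] /=; last by rewrite eqxx.
case: w => [|y w] //; rewrite /reduced /= => /andP [cy _].
by rewrite eq_sym (negbTE cy).
Qed.

Lemma stepw_map (P : {perm 'I_d}) w c : stepw (map P w) (P c) = map P (stepw w c).
Proof. by case: w => [|x w] //=; rewrite (inj_eq perm_inj); case: eqP. Qed.

Lemma adj_sym u v : adj u v -> adj v u.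
Proof. by case=> c ->; exists c; apply: val_inj; rewrite /= stepwK // (valP u). Qed.

Lemma adj_cons u v c : word v = c :: word u -> adj v u.
Proof. by move=> Ev; exists c; apply: val_inj; rewrite /= Ev /= eqxx. Qed.

(* On root-first reduced words this is the tree distance: drop the common
   prefix and add up what is left. *)
Fixpoint wdist s t : nat :=
  match s, t with
  | x :: s', y :: t' => if x == y then wdist s' t' else size s + size t
  | _, _ => size s + size t
  end.

Lemma wdists0 s : wdist s [::] = size s.
Proof. by case: s => //= *; rewrite addn0. Qed.

Lemma wdistss s : wdist s s = 0.
Proof. by elim: s => //= x s IH; rewrite eqxx. Qed.

Lemma wdistC s t : wdist s t = wdist t s.
Proof.
elim: s t => [|x s IH] [|y t] //=; try by rewrite addnC.
by rewrite eq_sym; case: eqP => _; [exact: IH | rewrite addnC].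
Qed.

Lemma wdist_rcons s t c :
  (wdist s (rcons t c) <= (wdist s t).+1)%N /\
  (wdist s t <= (wdist s (rcons t c)).+1)%N.
Proof.
elim: s t => [|x s IH] t; first by rewrite /= size_rcons; lia.
case: t => [|y t] /=; first by rewrite wdists0; case: eqP => _ /=; lia.
by case: eqP => _; [exact: IH | rewrite /= size_rcons; lia].
Qed.

Lemma wdist_step s v c :
  (wdist s (rev (word (step v c))) <= (wdist s (rev (word v))).+1)%N.
Proof.
rewrite /=; case: (word v) => [|x w] /=; first by have [] := wdist_rcons s [::] c.
case: eqP => [->|_]; first by have [] := wdist_rcons s (rev w) c; rewrite rev_cons.
by rewrite !rev_cons; have [] := wdist_rcons s (rcons (rev w) x) c.
Qed.

Lemma walk_wdist n u v : walk n u v -> (wdist (rev (word u)) (rev (word v)) <= n)%N.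
Proof.
elim=> [w|m u' v' w _ IH [c ->]]; first by rewrite wdistss.
exact: leq_trans (wdist_step _ _ _) _.
Qed.

(* Toggling the letter c at the root end of a word inverts the root edge of
   colour c; it commutes with every [stepw _ c'], hence preserves colours. *)
Definition flipw c w := rev (stepw (rev w) c).

Lemma flipw_cons c x w : w != [::] -> flipw c (x :: w) = x :: flipw c w.
Proof.
rewrite /flipw rev_cons; case/lastP: w => [|w y] // _.
rewrite rev_rcons rcons_cons /=; case: eqP => _; first by rewrite rev_rcons.
by rewrite -!rcons_cons rev_rcons.
Qed.

Lemma flipw_step c w c' : flipw c (stepw w c') = stepw (flipw c w) c'.
Proof.
case: w => [|x [|y w]].
- by rewrite /flipw /=; case: (eqVneq c' c).
- rewrite /flipw /=; case: (eqVneq x c') => [->|nxc] /=.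
    by case: (eqVneq c' c) => [->|] //=; rewrite eqxx.
  by case: (eqVneq x c) => //= _; rewrite (negbTE nxc).
- rewrite [flipw c (x :: _)]flipw_cons //=; case: eqP => _ //=.
  by rewrite flipw_cons // flipw_cons.
Qed.

Lemma flipwK c w : reduced w -> flipw c (flipw c w) = w.
Proof. by move=> w_red; rewrite /flipw revK stepwK ?revK // reduced_rev. Qed.

Lemma reduced_flipw c w : reduced w -> reduced (flipw c w).
Proof. by move=> w_red; apply/reduced_rev/stepw_reduced/reduced_rev. Qed.

Definition edge_flip c v : vert d := Vert (reduced_flipw c (valP v)).

Lemma edge_flipK c : involutive (edge_flip c).
Proof. by move=> v; apply: val_inj; rewrite /= flipwK // (valP v). Qed.

Lemma edge_flip_step c v c' : edge_flip c (step v c') = step (edge_flip c v) c'.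
Proof. by apply: val_inj; rewrite /= flipw_step. Qed.

Local Open Scope ring_scope.

Lemma walk_chain (f : int -> vert d) :
  (forall k, adj (f k) (f (k + 1))) -> forall i j, walk `|i - j|%N (f i) (f j).
Proof.
move=> f_adj.
have up i (n : nat) : walk n (f i) (f (i + n%:Z)).
  elim: n => [|n IH]; first by rewrite addr0; constructor.
  by apply: walkS IH _; have -> : i + n.+1%:Z = i + n%:Z + 1 by lia.
have down i (n : nat) : walk n (f i) (f (i - n%:Z)).
  elim: n => [|n IH]; first by rewrite subr0; constructor.
  apply: walkS IH _; apply: adj_sym.
  by have -> : i - n%:Z = i - n.+1%:Z + 1 by lia.
move=> i j; case: (lerP i j) => ij.
  by have -> : f j = f (i + `|i - j|%N%:Z) by congr f; lia.
by have -> : f j = f (i - `|i - j|%N%:Z) by congr f; lia.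
Qed.

End TreeWords.

Section AutomorphismGroup.
Variables (d : nat) (F F' : {group {perm 'I_d}}).

Lemma loc_in_comp (S : {group {perm 'I_d}}) g h v :
  loc_in S h v -> loc_in S g (h v) -> loc_in S (g \o h) v.
Proof.
case=> Ph ShP Hh [Pg SgP Hg]; exists (Ph * Pg)%g; first by rewrite groupM.
by move=> c; rewrite /= Hh Hg permM.
Qed.

Lemma in_GFF'_intro g : bijective g -> in_G F g -> in_U F' g -> in_GFF' F F' g.
Proof.
move=> bij_g G_g U_g; split=> //; split=> // u v; split.
- by case=> c ->; have [P _ HP] := U_g u; exists (P c).
- case=> c Eg; have [P _ HP] := U_g u; exists (P^-1 c)%g.
  by apply: (bij_inj bij_g); rewrite HP permKV.
Qed.

Lemma in_GFF'_comp g h : in_GFF' F F' g -> in_GFF' F F' h -> in_GFF' F F' (g \o h).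
Proof.
move=> [[bij_g _] [[sg G_g] U_g]] [[bij_h _] [[sh G_h] U_h]].
apply: in_GFF'_intro; first exact: bij_comp.
- have [h' hK h'K] := bij_h.
  exists (sh ++ map h' sg) => v; rewrite mem_cat negb_or => /andP [v_sh v_sg].
  apply: loc_in_comp; first exact: G_h.
  by apply: G_g; apply: contra v_sg => sg_hv; apply/mapP; exists (h v); rewrite ?hK.
- by move=> v; apply: loc_in_comp.
Qed.

Lemma in_GFF'_colour_preserving g :
  bijective g -> (forall v c, g (step v c) = step (g v) c) -> in_GFF' F F' g.
Proof.
move=> bij_g g_step.
have loc (S : {group {perm 'I_d}}) v : loc_in S g v.
  by exists 1%g => // c; rewrite perm1.
by apply: in_GFF'_intro => //; exists [::].
Qed.

Lemma edge_flip_GFF' c : in_GFF' F F' (edge_flip c).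
Proof.
apply: in_GFF'_colour_preserving; last exact: edge_flip_step.
by exists (edge_flip c); apply: edge_flipK.
Qed.

End AutomorphismGroup.

Lemma nontrivial_perm_group_moves (T : finType) (G : {group {perm T}}) :
  G :!=: 1%g -> exists q a, q \in G /\ q a != a.
Proof.
case/trivgPn=> q qG q_nt; exists q.
have /existsP [a qa] : [exists a, q a != a].
  apply: contraR q_nt => /existsPn q_fix; apply/eqP/permP => x.
  by rewrite perm1; apply/eqP/negbNE.
by exists a.
Qed.

Section Line.
Variables (d : nat) (q : {perm 'I_d}) (a : 'I_d).
Hypothesis qa_neq : q a != a.

Fixpoint ray (x : 'I_d) (k : nat) : seq 'I_d :=
  if k is k'.+1 then x :: ray (q x) k' else [::].

Lemma size_ray x k : size (ray x k) = k.
Proof. by elim: k x => //= k IH x; rewrite IH. Qed.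

Lemma map_ray x k : map q (ray x k) = ray (q x) k.
Proof. by elim: k x => //= k IH x; rewrite IH. Qed.

Lemma ray_rcons x k : ray x k.+1 = rcons (ray x k) ((q ^+ k)%g x).
Proof.
elim: k x => [|k IH] x; first by rewrite expg0 perm1.
by rewrite expgS permM /= -IH.
Qed.

Lemma ray_reduced x k : q x != x -> reduced (ray x k).
Proof.
elim: k x => [|k IH] x qx //.
have /IH : q (q x) != q x by rewrite (inj_eq perm_inj).
by case: k {IH} => [|k] //; rewrite /reduced /= => ->; rewrite andbT eq_sym qx.
Qed.

Lemma wdist_ray x i j : wdist (ray x i) (ray x j) = (i - j + (j - i))%N.
Proof.
by elim: i x j => [|i IH] x [|j] /=; rewrite ?size_ray ?eqxx ?IH.
Qed.

Lemma wdist_ray_opp i j : wdist (ray a i) (ray (q a) j) = (i + j)%N.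
Proof.
case: i j => [|i] [|j] /=; rewrite ?wdists0 ?size_ray ?addn0 //.
by rewrite eq_sym (negbTE qa_neq).
Qed.

Lemma last_rev_ray y x k : last y (rev (ray x k.+1)) = x.
Proof. by rewrite /= rev_cons last_rcons. Qed.

Local Open Scope ring_scope.

Definition line_path (n : int) : seq 'I_d :=
  if n is Negz k then ray (q a) k.+1 else ray a `|n|%N.

Lemma line_pathN (k : nat) : line_path (- k%:Z) = ray (q a) k.
Proof. by case: k. Qed.

Lemma line_path_reduced n : reduced (rev (line_path n)).
Proof.
by apply: reduced_rev; case: n => k; apply: ray_reduced; rewrite ?(inj_eq perm_inj).
Qed.

Definition line (n : int) : vert d := Vert (line_path_reduced n).

Lemma line_word n : word (line n) = rev (line_path n).
Proof. by []. Qed.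

Lemma line_path_nat (k : nat) : line_path k = ray a k.
Proof. by []. Qed.

Lemma line_adj n : adj (line n) (line (n + 1)).
Proof.
case: n => k.
  have -> : k%:Z + 1 = k.+1%:Z by lia.
  apply/adj_sym/(adj_cons (c := (q ^+ k)%g a)).
  by rewrite !line_word !line_path_nat ray_rcons rev_rcons.
have -> : Negz k + 1 = - k%:Z by lia.
apply: (adj_cons (c := (q ^+ k)%g (q a))).
by rewrite !line_word NegzE !line_pathN ray_rcons rev_rcons.
Qed.

Lemma wdist_line i j : wdist (line_path i) (line_path j) = `|i - j|%N.
Proof.
case: i j => i [] j; rewrite ?NegzE ?line_path_nat ?line_pathN.
- by rewrite wdist_ray; lia.
- by rewrite wdist_ray_opp; lia.
- by rewrite wdistC wdist_ray_opp; lia.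
- by rewrite wdist_ray; lia.
Qed.

Lemma line_geodesic : geodesic_line line.
Proof.
move=> i j; split; first by apply: walk_chain; apply: line_adj.
by move=> m lt_m /walk_wdist; rewrite /= !revK wdist_line; lia.
Qed.

Lemma edge_flip_line n : edge_flip a (line n) = line (1 - n).
Proof.
apply: val_inj; rewrite /= /flipw revK; congr rev.
case: n => [[|k]|k].
- by rewrite subr0.
- have -> : 1 - k.+1%:Z = - k%:Z by lia.
  by rewrite line_pathN /= eqxx.
- have -> : 1 - Negz k = k.+2%:Z by lia.
  by rewrite /= (negbTE qa_neq).
Qed.

End Line.

Section LineIsometries.
Variables (d : nat) (F F' : {group {perm 'I_d}}) (p q : {perm 'I_d}) (a : 'I_d).
Hypotheses (sFF' : F \subset F') (orbitsF : preserves_orbits F F').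
Hypotheses (qF : q \in F) (pF' : p \in F') (qa_neq : q a != a).
Hypotheses (pa : p a = q a) (pqa : p (q a) = a).

(* The permutation applied below the root edge of colour c; an element of F
   agreeing with p at c exists since F' preserves the F-orbits. *)
Definition branch_perm (c : 'I_d) : {perm 'I_d} :=
  if c == a then q else if c == q a then q^-1%g
  else odflt 1%g [pick y in F | y c == p c].

Lemma branch_perm_in c : branch_perm c \in F.
Proof.
rewrite /branch_perm; case: eqP => // _; case: eqP => _; first by rewrite groupV.
by case: pickP => [y /andP [] | _] //=; rewrite group1.
Qed.

Lemma branch_permE c : branch_perm c c = p c.
Proof.
rewrite /branch_perm; case: eqP => [->|_]; first by rewrite pa.
case: eqP => [->|_]; first by rewrite permK pqa.
case: pickP => [y /andP [_ /eqP] //|none].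
by have [y yF yE] := orbitsF pF' c; have := none y; rewrite yF yE eqxx.
Qed.

(* [last a w] is the colour of the root edge of the path w; the default a is
   irrelevant, w = [::] being fixed. *)
Definition root_reflw (w : seq 'I_d) := map (branch_perm (last a w)) w.

Definition root_reflw_inv (w : seq 'I_d) :=
  map (branch_perm (p^-1%g (last a w)))^-1%g w.

Lemma root_reflwK : cancel root_reflw root_reflw_inv.
Proof.
case=> [|x w] //; rewrite /root_reflw_inv /= last_map branch_permE permK.
by rewrite permK (mapK (permK _)).
Qed.

Lemma root_reflw_invK : cancel root_reflw_inv root_reflw.
Proof.
case=> [|x w] //; rewrite /root_reflw /= last_map.
set c := p^-1%g _; have -> : ((branch_perm c)^-1)%g (last x w) = c.
  by apply: (@perm_inj _ (branch_perm c)); rewrite permKV branch_permE permKV.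
by rewrite permKV (mapK (permKV _)).
Qed.

Definition root_refl (v : vert d) : vert d :=
  Vert (reduced_map (branch_perm (last a (word v))) (valP v)).

Lemma root_refl_loc v :
  loc_in F' root_refl v /\ (word v != [::] -> loc_in F root_refl v).
Proof.
have loc_branch : word v != [::] -> loc_in F root_refl v.
  move=> v_nil; exists (branch_perm (last a (word v))); first exact: branch_perm_in.
  move=> c; apply: val_inj; rewrite /= /root_reflw stepw_map.
  by case: (word v) v_nil => [|x [|y w]] //= _; case: eqP.
split=> //; case: (eqVneq (word v) [::]) => [v_root|/loc_branch [P PF HP]].
  by exists p => // c; apply: val_inj; rewrite /= /root_reflw v_root /= branch_permE.
by exists P => //; apply: (subsetP sFF').
Qed.

Lemma root_refl_GFF' : in_GFF' F F' root_refl.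
Proof.
apply: in_GFF'_intro.
- pose inv v :=
    Vert (reduced_map (branch_perm (p^-1%g (last a (word v))))^-1%g (valP v)).
  exists inv => v; apply: val_inj; [exact: root_reflwK | exact: root_reflw_invK].
- exists [:: Vert (isT : reduced [::])] => v; rewrite inE => v_root.
  apply: (root_refl_loc v).2; apply: contra v_root => /eqP v_nil.
  by apply/eqP/val_inj.
- by move=> v; apply: (root_refl_loc v).1.
Qed.

Lemma branch_perm_a : branch_perm a = q.
Proof. by rewrite /branch_perm eqxx. Qed.

Lemma branch_perm_qa : branch_perm (q a) = q^-1%g.
Proof. by rewrite /branch_perm (negbTE qa_neq) eqxx. Qed.

Local Open Scope ring_scope.

Lemma root_refl_line n : root_refl (line qa_neq n) = line qa_neq (- n).
Proof.
apply: val_inj => /=.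
case: n => [[|k]|k] //.
- by rewrite line_path_nat line_pathN last_rev_ray branch_perm_a map_rev map_ray.
rewrite NegzE opprK line_pathN line_path_nat last_rev_ray branch_perm_qa map_rev.
by rewrite -map_ray (mapK (permK q)).
Qed.

Definition moves_line (g : vert d -> vert d) (e m : int) :=
  forall k, g (line qa_neq k) = line qa_neq (e * k + m).

Definition realizable (e m : int) := exists2 g, in_GFF' F F' g & moves_line g e m.

Lemma realizable_comp (e m e' m' e'' m'' : int) :
  realizable e m -> realizable e' m' -> e * e' = e'' -> e * m' + m = m'' ->
  realizable e'' m''.
Proof.
move=> [g Gg Mg] [h Gh Mh] <- <-; exists (g \o h); first exact: in_GFF'_comp.
by move=> k; rewrite /= Mh Mg mulrDr mulrA addrA.
Qed.

Lemma realizable_root_refl : realizable (-1) 0.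
Proof.
exists root_refl; first exact: root_refl_GFF'.
by move=> k; rewrite root_refl_line mulN1r addr0.
Qed.

Lemma realizable_edge_flip : realizable (-1) 1.
Proof.
exists (edge_flip a); first exact: edge_flip_GFF'.
by move=> k; rewrite edge_flip_line mulN1r addrC.
Qed.

Lemma realizable_shift m : realizable 1 m.
Proof.
have up : realizable 1 1.
  by eapply (realizable_comp realizable_edge_flip realizable_root_refl); lia.
have down : realizable 1 (-1).
  by eapply (realizable_comp realizable_root_refl realizable_edge_flip); lia.
elim/int_ind: m => [|k IH|k IH].
- by eapply (realizable_comp realizable_root_refl realizable_root_refl); lia.
- by eapply (realizable_comp up IH); lia.
- by eapply (realizable_comp down IH); lia.
Qed.

Lemma realizable_reflection m : realizable (-1) m.
Proof.
by eapply (realizable_comp (realizable_shift m) realizable_root_refl); lia.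
Qed.

Lemma moves_line_stabilizes g e m :
  e * e = 1 -> moves_line g e m -> stabilizes g (line qa_neq).
Proof.
move=> ee Mg; split=> [i|j]; first by exists (e * i + m).
by exists (e * (j - m)); rewrite Mg mulrA ee mul1r subrK.
Qed.

Lemma moves_line_Gplus g e m :
  in_GFF' F F' g -> moves_line g e m -> (2 %| m)%Z -> in_Gplus F F' g.
Proof.
move=> Gg Mg m_even; split=> //; exists (line qa_neq 0), `|0 - m|%N; split.
  by rewrite Mg mulr0 [0 + m]add0r; apply: line_geodesic.
by rewrite sub0r abszN -dvdn2.
Qed.

Lemma line_edge_transitive i j : exists g,
  in_Gplus F F' g /\ stabilizes g (line qa_neq) /\
  ((g (line qa_neq i) = line qa_neq j /\
    g (line qa_neq (i + 1)) = line qa_neq (j + 1)) \/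
   (g (line qa_neq i) = line qa_neq (j + 1) /\
    g (line qa_neq (i + 1)) = line qa_neq j)).
Proof.
have [ji_even|ji_odd] := boolP (2 %| j - i)%Z.
  have [g Gg Mg] := realizable_shift (j - i); exists g.
  split; first exact: moves_line_Gplus Gg Mg ji_even.
  split; first by apply: moves_line_stabilizes Mg; rewrite mulr1.
  by left; rewrite !Mg; split; congr line; lia.
have [g Gg Mg] := realizable_reflection (i + j + 1); exists g.
split; first by apply: moves_line_Gplus Gg Mg _; lia.
split; first by apply: moves_line_stabilizes Mg; rewrite mulrNN mulr1.
by right; rewrite !Mg; split; congr line; lia.
Qed.

End LineIsometries.

Unset Implicit Arguments.
Local Open Scope ring_scope.

Theorem mainTheorem8 (d : nat) (F F' : {group {perm 'I_d}}) :
  (3 <= d)%N ->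
  F \subset F' ->
  preserves_orbits F F' ->
  F :!=: 1%g ->
  two_transitive F' ->
  exists l : int -> vert d,
    geodesic_line l /\
    (exists t, in_Gplus F F' t /\ stabilizes t l /\
       ((forall i, t (l i) = l (i + 2)) \/ (forall i, t (l i) = l (i - 2)))) /\
    (exists r (k : int), in_Gplus F F' r /\ stabilizes r l /\
       forall i, r (l (k + i)) = l (k - i)) /\
    (forall i j : int, exists g, in_Gplus F F' g /\ stabilizes g l /\
       ((g (l i) = l j /\ g (l (i + 1)) = l (j + 1)) \/
        (g (l i) = l (j + 1) /\ g (l (i + 1)) = l j))).
Proof.
move=> _ sFF' orbitsF /nontrivial_perm_group_moves [q [a [qF qa_neq]]] F'_2trans.
have [p pF' [pa pqa]] : exists2 p, p \in F' & p a = q a /\ p (q a) = a.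
  by apply: F'_2trans; rewrite // eq_sym.
have [t Gt Mt] := realizable_shift sFF' orbitsF qF pF' qa_neq pa pqa 2.
have [r Gr Mr] := realizable_reflection sFF' orbitsF qF pF' qa_neq pa pqa 0.
exists (line qa_neq); split; first exact: line_geodesic.
split.
  exists t; split; first by apply: moves_line_Gplus Gt Mt _.
  split; first by apply: moves_line_stabilizes Mt; rewrite mulr1.
  by left=> i; rewrite Mt mul1r.
split; last exact: line_edge_transitive sFF' orbitsF qF pF' qa_neq pa pqa.
exists r, 0; split; first by apply: moves_line_Gplus Gr Mr _.
split; first by apply: moves_line_stabilizes Mr; rewrite mulrNN mulr1.
by move=> i; rewrite Mr !add0r mulN1r addr0.
Qed.
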